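(* Let $f$ be a scaling function and let $(\sigma_j)_{j\in\mathbb{N}}$ be a sequence of permutations with $|\sigma_j|\to\infty$ that converges at scale $f$ to the increasing limit, i.e. $\rho_{f}(\pi,\sigma_j)\to1$ if $\pi$ is an increasing permutation $12\dots k$ and $\rho_f(\pi,\sigma_j)\to0$ for every other permutation $\pi$. Then for every constant $c\in(0,1)$, the sequence $(\sigma_j)$ also converges at scale $cf$ to the increasing limit.
   Context: A scaling function is a function $f:\mathbb{N}\to\mathbb{R}^+$ with $f(n)\le n$ for all $n$, $f(n)\to\infty$ and $f(n)/n\to 0$. An occurrence of a pattern $\pi\in S_k$ in $\sigma\in S_n$ is a $k$-element set of indices $i_1<\dots<i_k$ such that $\sigma(i_1)\dots\sigma(i_k)$ is order-isomorphic to $\pi$; its width is $i_k-i_1+1$. For real $f\in[k,n]$, $\rho_f(\pi,\sigma)$ is the number of occurrences of $\pi$ in $\sigma$ of width at most $f$ divided by the number of $k$-element subsets of $[n]$ of width at most $f$, and $\rho_f(\pi,\sigma_j)$ means $\rho_{f(|\sigma_j|)}(\pi,\sigma_j)$. Convergence at scale $g$ to $\Xi$ means $\rho_{g(|\sigma_j|)}(\pi,\sigma_j)\to\Xi_\pi$ for every permutation $\pi$. *)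

From HB Require Import structures.
From mathcomp Require Import all_boot all_order all_algebra all_fingroup.
From mathcomp Require Import all_classical all_reals all_analysis.
Set Implicit Arguments. Unset Strict Implicit. Unset Printing Implicit Defensive.
Import Order.TTheory GRing.Theory Num.Theory.
Import numFieldNormedType.Exports.
Local Open Scope classical_set_scope.
Local Open Scope ring_scope.

(* An occurrence of a pattern of length k in sigma in S_n is a k-element set of
   indices i_1 < ... < i_k; we encode it by the strictly increasing map
   g : 'I_k -> 'I_n, a |-> i_(a+1) (bijective with k-element subsets). *)
Definition incr_map (k n : nat) (g : {ffun 'I_k -> 'I_n}) : bool :=
  [forall a : 'I_k, forall b : 'I_k, (a < b)%N ==> (g a < g b)%N].

Definition width (k n : nat) (g : {ffun 'I_k.+1 -> 'I_n}) : nat :=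
  ((g ord_max) - (g ord0)).+1.

Definition order_iso (k n : nat) (pi : 'S_k) (sigma : 'S_n)
  (g : {ffun 'I_k -> 'I_n}) : bool :=
  [forall a : 'I_k, forall b : 'I_k,
     ((sigma (g a) < sigma (g b))%N == (pi a < pi b)%N)].

Definition rho (R : realType) (k n : nat) (pi : 'S_k.+1) (sigma : 'S_n) (x : R) : R :=
  (#|[set g : {ffun 'I_k.+1 -> 'I_n} |
       [&& incr_map g, order_iso pi sigma g & ((width g)%:R <= x)]]|)%:R /
  (#|[set g : {ffun 'I_k.+1 -> 'I_n} | incr_map g && ((width g)%:R <= x)]|)%:R.

Definition scaling_function (R : realType) (f : nat -> R) : Prop :=
  [/\ (forall n : nat, (0 < n)%N -> 0 < f n),
      (forall n : nat, (0 < n)%N -> f n <= n%:R),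
      f @ \oo --> +oo &
      (fun n : nat => f n / n%:R) @ \oo --> 0].

Definition incr_limit (R : realType) (k : nat) (pi : 'S_k.+1) : R :=
  if pi == 1%g then 1 else 0.

Definition converges_at_scale (R : realType) (g : nat -> R) (sz : nat -> nat)
  (sigma : forall j : nat, 'S_(sz j)) (Xi : forall k : nat, 'S_k.+1 -> R) : Prop :=
  forall (k : nat) (pi : 'S_k.+1),
    (fun j : nat => rho pi (sigma j) (g (sz j))) @ \oo --> Xi k pi.

From HB Require Import structures.
From mathcomp Require Import all_boot all_order all_algebra all_fingroup.
From mathcomp Require Import all_classical all_reals all_analysis.
From mathcomp Require Import zify ring lra.
Import Order.TTheory GRing.Theory Num.Theory.
Import numFieldNormedType.Exports.

(* Write T_n(W) for the number of increasing index maps g : [k+1] -> [n] of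
   width at most W (the "windows" counted in the denominator of rho), and
   C_n(P, W) for those of them that moreover satisfy a property P, e.g. being
   an occurrence of pi.  Then rho_x(pi, sigma) = C_n(occ pi, |x|) / T_n(|x|).

   The whole proof rests on a counting estimate: for 0 < c < 1 and
   2(k+1) <= cF <= cn,   T_n(F) <= B * T_n(cF)   with B = (2(k+1)/c)^k/(1-c)
   depending only on k and c.  It follows from the upper bound
   T_n(W) <= n W^k (choose the first index and k offsets below W) and the
   lower bound T_n(W) >= (n - (k+1)m) m^k when (k+1)m <= W (place the k+1
   indices in consecutive blocks of length m).  Since C_n(P, .) is monotone,
   the density of any property P at scale cF is then at most B times its
   density at scale F.  Applied to "occurrence of pi" this transfers the
   limit 0, applied to its complement it transfers the limit 1. *)

Lemma incr_map_le (k n : nat) (g : {ffun 'I_k -> 'I_n}) (a b : 'I_k) :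
  incr_map g -> (a <= b)%N -> (g a <= g b)%N.
Proof.
move=> /forallP g_incr; rewrite leq_eqVlt => /orP[/eqP/val_inj -> // | lt_ab].
by have /forallP/(_ b)/implyP/(_ lt_ab)/ltnW := g_incr a.
Qed.
Arguments incr_map_le {k n g a b}.

Lemma euclid_unique (m q1 r1 q2 r2 : nat) : (r1 < m)%N -> (r2 < m)%N ->
  m * q1 + r1 = m * q2 + r2 -> q1 = q2 /\ r1 = r2.
Proof.
move=> r1_lt r2_lt E; have m_gt0 : (0 < m)%N by apply: leq_ltn_trans r1_lt.
have := congr1 (divn^~ m) E.
rewrite /= !(mulnC m) !divnMDl // !divn_small // !addn0 => q12.
by split=> //; move: E; rewrite q12 => /addnI.
Qed.
Arguments euclid_unique {m q1 r1 q2 r2}.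

Section WindowCounts.
Variables k n : nat.

Definition wcount (P : pred {ffun 'I_k.+1 -> 'I_n}) (W : nat) : nat :=
  #|[set g | [&& incr_map g, P g & (width g <= W)%N]]|.

Definition wtotal (W : nat) : nat := wcount predT W.

Lemma wcount_mono (P : pred {ffun 'I_k.+1 -> 'I_n}) (W W' : nat) :
  (W <= W')%N -> (wcount P W <= wcount P W')%N.
Proof.
move=> le_WW'; apply: subset_leq_card; apply/fintype.subsetP => g; rewrite !inE.
by case/and3P => -> -> /leq_trans->.
Qed.

Lemma wcount_compl (P : pred {ffun 'I_k.+1 -> 'I_n}) (W : nat) :
  (wcount P W + wcount (predC P) W)%N = wtotal W.
Proof.
rewrite /wtotal /wcount -[RHS](cardsID [set g | P g]); congr (_ + _)%N;
  apply: eq_card => g; rewrite !inE;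
  by case: (incr_map g) (P g) (width g <= W)%N => [] [] [].
Qed.

(* Upper bound: a map of width at most W is determined by its first index
   and by the k offsets of the remaining indices, all smaller than W. *)
Lemma wtotal_upper (W : nat) : (wtotal W <= n * W ^ k)%N.
Proof.
case: W => [|W].
  suff -> : wtotal 0 = 0%N by [].
  apply/eqP; rewrite cards_eq0; apply/eqP/setP => g.
  by rewrite !inE /width ltn0 !andbF.
pose code (g : {ffun 'I_k.+1 -> 'I_n}) :=
  (g ord0, [ffun a : 'I_k => (inord (g (lift ord0 a) - g ord0) : 'I_W.+1)]).
have offset_small g b : g \in [set g | [&& incr_map g, predT g & (width g <= W.+1)%N]] ->
    (g (lift ord0 b) - g ord0 < W.+1)%N.
  rewrite inE /width => /and3P[g_incr _ g_width]; apply: leq_ltn_trans g_width.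
  by apply: leq_sub2r; apply: (incr_map_le g_incr); rewrite -ltnS.
rewrite /wtotal /wcount -(card_in_imset (f := code)).
  by apply: leq_trans (max_card _) _; rewrite card_prod card_ffun !card_ord.
move=> g1 g2 G1 G2 [e0 e]; apply/ffunP => a.
case: (unliftP ord0 a) => [b ->|->]; last by rewrite e0.
have := congr1 (fun h : {ffun 'I_k -> 'I_W.+1} => nat_of_ord (h b)) e.
rewrite !ffunE /= !inordK ?offset_small //.
move: G1 G2; rewrite !inE => /and3P[i1 _ _] /and3P[i2 _ _].
have h1 := incr_map_le i1 (leq0n (lift ord0 b) : (@ord0 k <= _)%N).
have h2 := incr_map_le i2 (leq0n (lift ord0 b) : (@ord0 k <= _)%N).
by move=> E; apply: ord_inj; rewrite -(subnK h1) -(subnK h2) E e0.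
Qed.

Lemma block_pos_lt {m s a h : nat} : (h < m)%N -> (a <= k)%N -> (s < n %/ m - k)%N ->
  (m * (s + a) + h < n)%N.
Proof.
move=> hm ak sS; have nq := leq_divM n m.
have : (m * (s + a).+1 <= m * (n %/ m))%N by rewrite leq_mul2l; apply/orP; right; lia.
nia.
Qed.

(* Block construction: choosing a starting block s < n %/ m - k and one
   position in each of the blocks s, ..., s+k gives distinct increasing maps
   of width at most (k+1)m. *)
Lemma wtotal_blocks {m W : nat} : (0 < m)%N -> (k.+1 * m <= W)%N ->
  ((n %/ m - k) * m ^ k.+1 <= wtotal W)%N.
Proof.
move=> m_gt0 mW; set S := (n %/ m - k)%N.
pose embed (p : 'I_S * {ffun 'I_k.+1 -> 'I_m}) : {ffun 'I_k.+1 -> 'I_n} :=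
  [ffun a => Ordinal (block_pos_lt (ltn_ord (p.2 a)) (leq_ord a) (ltn_ord p.1))].
have embed_inj : injective embed.
  move=> [s1 h1] [s2 h2] /ffunP E.
  have Ea (a : 'I_k.+1) : m * (s1 + a) + h1 a = m * (s2 + a) + h2 a.
    by have := congr1 val (E a); rewrite !ffunE.
  have [es _] := euclid_unique (ltn_ord _) (ltn_ord _) (Ea ord0).
  have -> : s1 = s2 by apply: val_inj; move: es => /=; lia.
  congr pair; apply/ffunP => a; apply: ord_inj.
  by have [_ ->] := euclid_unique (ltn_ord _) (ltn_ord _) (Ea a).
have -> : (S * m ^ k.+1 = #|embed @: [set: 'I_S * {ffun 'I_k.+1 -> 'I_m}]|)%N.
  by rewrite card_imset // cardsT card_prod card_ffun !card_ord.
apply: subset_leq_card; apply/fintype.subsetP => _ /imsetP[[s h] _ ->].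
rewrite inE /=; apply/andP; split.
  apply/forallP => a; apply/forallP => b; apply/implyP => ab.
  rewrite !ffunE /=; have ha := ltn_ord (h a).
  have : (m * (s + a).+1 <= m * (s + b))%N by rewrite leq_mul2l; lia.
  rewrite mulnS; move: ha.
  move: (m * (s + a))%N (m * (s + b))%N (nat_of_ord (h a)) (nat_of_ord (h b)); lia.
rewrite /width !ffunE /= addn0; have := ltn_ord (h ord_max).
rewrite mulnDr; move: mW; rewrite mulSn (mulnC k).
move: (m * s)%N (m * k)%N (nat_of_ord (h ord_max)) (nat_of_ord (h ord0)); lia.
Qed.

Lemma wtotal_lower (m W : nat) : (0 < m)%N -> (k.+1 * m <= W)%N ->
  ((n - k.+1 * m) * m ^ k <= wtotal W)%N.
Proof.
move=> m_gt0 mW; apply: leq_trans (wtotal_blocks m_gt0 mW).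
rewrite expnS mulnA leq_mul2r; apply/orP; right.
have := ltn_mod n m; rewrite m_gt0 => /idP r_lt.
have := divn_eq n m; rewrite mulnBl mulSn.
move: r_lt; move: (n %/ m * m)%N (n %% m)%N (k * m)%N => x y z; lia.
Qed.
End WindowCounts.

Arguments wcount {k n}.
Arguments wcount_mono {k n} P {W W'}.
Arguments wcount_compl {k n}.

Section RescalingDensities.
Context {R : realType}.
Local Open Scope classical_set_scope.
Local Open Scope ring_scope.

Lemma wtotal_ratio (k n m W W' : nat) (c D : R) :
  0 < c < 1 -> (0 < m)%N -> (k.+1 * m <= W')%N -> (k.+1 * m)%:R <= c * n%:R ->
  (0 < n)%N -> 0 <= D -> W%:R <= D * m%:R ->
  (0 < wtotal k n W')%N /\ (wtotal k n W)%:R <= D ^+ k / (1 - c) * (wtotal k n W')%:R.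
Proof.
move=> /andP[c_gt0 c_lt1] m_gt0 mW' m_le_cn n_gt0 D_ge0 W_le.
have m_le_n : (k.+1 * m <= n)%N.
  by rewrite -(ler_nat R); apply: le_trans m_le_cn _; rewrite ler_piMl // ltW.
have lower : (1 - c) * n%:R * m%:R ^+ k <= (wtotal k n W')%:R.
  apply: le_trans (_ : ((n - k.+1 * m) * m ^ k)%N%:R <= _); last first.
    by rewrite ler_nat wtotal_lower.
  rewrite natrM natrX (natrB _ m_le_n); apply: ler_wpM2r; rewrite ?exprn_ge0 //; lra.
have upper : (wtotal k n W)%:R <= n%:R * (D * m%:R) ^+ k.
  apply: le_trans (_ : (n * W ^ k)%N%:R <= _); first by rewrite ler_nat wtotal_upper.
  by rewrite natrM natrX ler_wpM2l // lerXn2r // ?nnegrE ?mulr_ge0.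
have lower_gt0 : 0 < (1 - c) * n%:R * m%:R ^+ k.
  by rewrite !mulr_gt0 ?subr_gt0 ?ltr0n ?exprn_gt0 ?ltr0n.
split; first by rewrite -(ltr0n R); apply: lt_le_trans lower.
apply: le_trans upper _.
have -> : n%:R * (D * m%:R) ^+ k = D ^+ k / (1 - c) * ((1 - c) * n%:R * m%:R ^+ k).
  by rewrite exprMn; field; rewrite subr_eq0 gt_eqF.
by rewrite ler_wpM2l // divr_ge0 ?exprn_ge0 // subr_ge0 ltW.
Qed.

Definition rescale_const (k : nat) (c : R) : R := (2 * k.+1%:R / c) ^+ k / (1 - c).

(* The counting estimate T_n(F) <= B T_n(cF), obtained from wtotal_ratio
   with block length m = |cF| %/ (k+1); the assumption 2(k+1) <= cF makes
   m positive and F <= (2(k+1)/c) m. *)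
Lemma wtotal_rescale {k n : nat} {c F : R} :
  0 < c < 1 -> (0 < n)%N -> F <= n%:R -> 2 * k.+1%:R <= c * F ->
  (0 < wtotal k n (Num.truncn (c * F)))%N /\
  (wtotal k n (Num.truncn F))%:R <= rescale_const k c * (wtotal k n (Num.truncn (c * F)))%:R.
Proof.
move=> c01 n_gt0 F_le_n cF_big; have /andP[c_gt0 c_lt1] := c01.
have k_gt0 : 0 < k.+1%:R :> R by rewrite ltr0n.
have cF_gt0 : 0 < c * F by apply: lt_le_trans cF_big; rewrite mulr_gt0.
have F_gt0 : 0 < F by rewrite -(pmulr_rgt0 _ c_gt0).
set W' := Num.truncn (c * F); set m := (W' %/ k.+1)%N.
have W'_le : W'%:R <= c * F by rewrite truncn_le ltW.
have cF_lt : c * F < (m.+1 * k.+1)%N%:R.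
  apply: lt_le_trans (truncnS_gt _) _; rewrite ler_nat; exact: ltn_ceil.
have m_big : c * F / 2 < k.+1%:R * m%:R.
  by move: cF_lt; rewrite natrM -natr1; nra.
have m_gt0 : (0 < m)%N.
  by rewrite lt0n; apply/negP => /eqP m0; move: m_big; rewrite m0 mulr0; nra.
have mW' : (k.+1 * m <= W')%N by rewrite mulnC leq_divM.
rewrite /rescale_const; apply: (@wtotal_ratio k n m) => //.
- apply: le_trans (_ : W'%:R <= _); first by rewrite ler_nat.
  by apply: le_trans W'_le _; rewrite ler_pM2l.
- by rewrite divr_ge0 ?mulr_ge0 // ltW.
- apply: le_trans (_ : F <= _); first by rewrite truncn_le ltW.
  by rewrite mulrAC ler_pdivlMr //; nra.
Qed.

Definition density {k n : nat} (P : pred {ffun 'I_k.+1 -> 'I_n}) (W : nat) : R :=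
  (wcount P W)%:R / (wtotal k n W)%:R.

Lemma rho_density (k n : nat) (pi : 'S_k.+1) (sigma : 'S_n) (x : R) : 0 <= x ->
  rho pi sigma x = density (order_iso pi sigma) (Num.truncn x).
Proof.
move=> x_ge0; have memE (T : finType) (P : pred T) y :
  (y \in ([set z | P z])%classic) = P y by apply/idP/idP; rewrite in_setE.
rewrite /rho /density /wtotal /wcount; congr (_%:R / _%:R); apply: eq_card => g;
  by rewrite memE inE (truncn_ge_nat _ x_ge0).
Qed.

Lemma density_ge0_le1 (k n : nat) (P : pred {ffun 'I_k.+1 -> 'I_n}) (W : nat) :
  0 <= density P W <= 1.
Proof.
rewrite /density divr_ge0 //=; have [->|T_gt0] := posnP (wtotal k n W).
  by rewrite invr0 mulr0.
by rewrite ler_pdivrMr ?ltr0n // mul1r ler_nat -(wcount_compl P) leq_addr.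
Qed.

Lemma density_compl (k n : nat) (P : pred {ffun 'I_k.+1 -> 'I_n}) (W : nat) :
  (0 < wtotal k n W)%N -> 1 - density P W = density (predC P) W.
Proof.
rewrite /density -(wcount_compl P) -(ltr0n R) natrD => T_gt0.
by field; rewrite gt_eqF.
Qed.

Lemma density_rescale {k n : nat} (P : pred {ffun 'I_k.+1 -> 'I_n}) {W W' : nat} {B : R} :
  (W <= W')%N -> (0 < wtotal k n W)%N -> (wtotal k n W')%:R <= B * (wtotal k n W)%:R ->
  density P W <= B * density P W'.
Proof.
move=> le_WW' T_gt0 T_ratio; rewrite /density.
have t_gt0 : 0 < (wtotal k n W)%:R :> R by rewrite ltr0n.
have t'_gt0 : 0 < (wtotal k n W')%:R :> R.
  by rewrite ltr0n; apply: leq_trans T_gt0 (wcount_mono predT le_WW').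
have x_le : (wcount P W)%:R <= (wcount P W')%:R :> R by rewrite ler_nat wcount_mono.
have B_ge1 : 1 <= B * (wtotal k n W)%:R / (wtotal k n W')%:R by rewrite ler_pdivlMr // mul1r.
have -> : B * ((wcount P W')%:R / (wtotal k n W')%:R) =
    (wcount P W')%:R * (B * (wtotal k n W)%:R / (wtotal k n W')%:R) / (wtotal k n W)%:R.
  by field; rewrite ?gt_eqF.
rewrite ler_pM2r ?invr_gt0 //.
by apply: le_trans x_le _; rewrite ler_peMr.
Qed.

Lemma rho_rescale (k n : nat) (pi : 'S_k.+1) (sigma : 'S_n) (c F : R) :
  0 < c < 1 -> (0 < n)%N -> F <= n%:R -> 2 * k.+1%:R <= c * F ->
  [/\ 0 <= rho pi sigma (c * F) <= 1,
      rho pi sigma (c * F) <= rescale_const k c * rho pi sigma F &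
      1 - rho pi sigma (c * F) <= rescale_const k c * (1 - rho pi sigma F)].
Proof.
move=> c01 n_gt0 F_le_n cF_big; have /andP[c_gt0 c_lt1] := c01.
have [T_gt0 T_ratio] := wtotal_rescale c01 n_gt0 F_le_n cF_big.
have cF_ge0 : 0 <= c * F by apply: le_trans cF_big; rewrite mulr_ge0.
have F_ge0 : 0 <= F by rewrite -(pmulr_rge0 _ c_gt0).
have trunc_le : (Num.truncn (c * F) <= Num.truncn F)%N.
  by apply: le_truncn; rewrite ler_piMl // ltW.
have T'_gt0 : (0 < wtotal k n (Num.truncn F))%N.
  exact: leq_trans T_gt0 (wcount_mono predT trunc_le).
rewrite !rho_density //; split; first exact: density_ge0_le1.
  exact: density_rescale.
by rewrite !density_compl //; apply: density_rescale.
Qed.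

Lemma eventually_rescalable {f : nat -> R} {sz : nat -> nat} (k : nat) {c : R} :
  scaling_function f ->
  (forall M : nat, exists J : nat, forall j : nat, (J <= j)%N -> (M <= sz j)%N) -> 0 < c ->
  \forall j \near \oo, [/\ (0 < sz j)%N, f (sz j) <= (sz j)%:R & 2 * k.+1%:R <= c * f (sz j)].
Proof.
move=> [_ f_le f_infty _] sz_infty c_gt0.
have [N _ f_big] := (cvgryPge f).1 f_infty (2 * k.+1%:R / c).
have [J sz_big] := sz_infty (maxn N 1).
exists J => // j /= Jj; have := sz_big j Jj; rewrite geq_max => /andP[Nj sz_gt0].
split => //; first exact: f_le.
by rewrite [c * _]mulrC -ler_pdivrMr //; apply: f_big.
Qed.

Lemma cvg0_dominated {u v : nat -> R} {B : R} :
  (\forall j \near \oo, 0 <= u j <= B * v j) -> v @ \oo --> 0 -> u @ \oo --> 0.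
Proof.
move=> u_dom v_lim.
apply: (squeeze_cvgr (f := fun=> 0) (h := fun j => B * v j)) => //; first exact: cvg_cst.
by rewrite -(mulr0 B); apply: cvgM => //; exact: cvg_cst.
Qed.

Lemma cvg1_dominated {u v : nat -> R} {B : R} :
  (\forall j \near \oo, u j <= 1 /\ 1 - u j <= B * (1 - v j)) ->
  v @ \oo --> (1 : R) -> u @ \oo --> (1 : R).
Proof.
move=> u_dom v_lim.
have deficit_lim : (fun j => 1 - u j) @ \oo --> 0.
  apply: (cvg0_dominated (v := fun j => 1 - v j) (B := B)).
    by apply: filterS u_dom => j [u_le1 u_cmp]; rewrite subr_ge0 u_le1 u_cmp.
  by rewrite -(subrr (1 : R)); apply: cvgB => //; exact: cvg_cst.
have -> : u = fun j => 1 - (1 - u j) by apply/funext => j; rewrite subKr.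
have : (fun j => 1 - (1 - u j)) @ \oo --> (1 - 0 : R) by apply: cvgB => //; exact: cvg_cst.
by rewrite subr0.
Qed.

End RescalingDensities.

Local Open Scope classical_set_scope.
Local Open Scope ring_scope.

Theorem mainTheorem8 (R : realType) (f : nat -> R) (sz : nat -> nat)
  (sigma : forall j : nat, 'S_(sz j)) :
  scaling_function f ->
  (forall M : nat, exists J : nat, forall j : nat, (J <= j)%N -> (M <= sz j)%N) ->
  converges_at_scale f sigma (@incr_limit R) ->
  forall c : R, 0 < c < 1 ->
    converges_at_scale (fun n : nat => c * f n) sigma (@incr_limit R).
Proof.
move=> f_scaling sz_infty f_conv c c01 k pi /=.
have /andP[c_gt0 _] := c01.
pose r j := rho pi (sigma j) (f (sz j)).
pose r' j := rho pi (sigma j) (c * f (sz j)).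
have cmp : \forall j \near \oo,
    [/\ 0 <= r' j <= 1, r' j <= rescale_const k c * r j &
        1 - r' j <= rescale_const k c * (1 - r j)].
  apply: filterS (eventually_rescalable k f_scaling sz_infty c_gt0) => j [sz_gt0 f_le cf_big].
  exact: rho_rescale.
have := f_conv k pi; rewrite /incr_limit; case: eqP => _ r_lim.
- apply: (cvg1_dominated (v := r) (B := rescale_const k c)) => //.
  by apply: filterS cmp => j [/andP[_ r'_le1] _ r'_cmp].
- apply: (cvg0_dominated (v := r) (B := rescale_const k c)) => //.
  by apply: filterS cmp => j [/andP[r'_ge0 _] r'_cmp _]; rewrite r'_ge0 r'_cmp.
Qed.
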